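(* Let $Y_1,Y_2,\ldots$ be i.i.d. Bernoulli$(1/2)$ and let $(Z^k)_k$ be generated by the bit-drop scheme described in the context, independently of $(Y_i)$. For integers $l\ge1$, $k\ge0$ let $L^a_l(k)$ be the length of a longest common subsequence of $Z^k$ and $Y_1\ldots Y_l$. There exists a function $\delta:\mathbb{R}\to\mathbb{R}$ with $\lim_{\epsilon\to0}\delta(\epsilon)=0$ such that for every $\epsilon>0$ there are constants $c>0$, $C>0$ (possibly depending on $\epsilon$ but not on $l$) with $$P\Big(L^a_l\big(\lfloor 2l(1-\delta(\epsilon))\rfloor\big)>l(1-\epsilon)\Big)\leq Ce^{-cl}\quad\text{for all } l>0.$$
   Context: Bit-drop scheme: let $V_1,V_2,\ldots$ be i.i.d. Bernoulli$(1/2)$ and let $T_3,T_4,\ldots$ be independent, independent of $(V_k)$, with $T_{k+1}$ uniform on $\{2,\ldots,k\}$. Set $Z^2:=V_1V_2$ and, given $Z^k=Z^k_1\ldots Z^k_k$, define $Z^{k+1}_j:=Z^k_j$ for $j<T_{k+1}$, $Z^{k+1}_{T_{k+1}}:=V_{k+1}$, $Z^{k+1}_j:=Z^k_{j-1}$ for $T_{k+1}<j\le k+1$. Convention: $Z^0$ empty, $Z^1:=V_1$. (Each $Z^k$ is a uniformly random binary word of length $k$.) *)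

From HB Require Import structures.
From mathcomp Require Import all_boot all_order all_algebra.
From mathcomp Require Import all_classical all_reals all_analysis.
Set Implicit Arguments. Unset Strict Implicit. Unset Printing Implicit Defensive.
Import Order.TTheory GRing.Theory Num.Theory.
Local Open Scope ring_scope.

(* Bit-drop scheme, 1-indexed: V j = V_j, T j = T_j.
   Z^0 = [::], Z^1 = V_1, Z^2 = V_1 V_2, and Z^{k+1} is Z^k with V_{k+1}
   inserted at (1-based) position T_{k+1}. *)
Fixpoint bitdrop (V : nat -> bool) (T : nat -> nat) (k : nat) : seq bool :=
  match k with
  | 0 => [::]
  | 1 => [:: V 1%N]
  | 2 => [:: V 1%N; V 2%N]
  | k'.+1 => let z := bitdrop V T k' in
             take (T k'.+1).-1 z ++ V k'.+1 :: drop (T k'.+1).-1 z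
  end.

Definition lcs (a b : seq bool) : nat :=
  (\max_(m : (size a).-tuple bool | subseq (mask m a) b) size (mask m a))%N.

(* Finite sample space for the variables relevant at parameters (l, k):
   (Y_1..Y_l, V_1..V_k, T_1..T_k) (T_1, T_2 are dummies fixed to 0). *)
Definition Omega (l k : nat) : finType :=
  (l.-tuple bool * k.-tuple bool * k.-tuple 'I_k)%type.

(* T_j is uniform on {2,...,j-1} for j >= 3. *)
Definition admissibleT (k : nat) (t : k.-tuple 'I_k) : bool :=
  [forall i : 'I_k, if (3 <= i.+1)%N then (2 <= tnth t i <= i)%N
                    else (tnth t i == 0 :> nat)].

Definition Zof (k : nat) (v : seq bool) (t : seq nat) : seq bool :=
  bitdrop (fun j => nth false v j.-1) (fun j => nth 0%N t j.-1) k.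

Definition La (l k : nat) (w : Omega l k) : nat :=
  lcs (Zof k w.1.2 (map val w.2)) w.1.1.

(* The (product, hence uniform on the admissible set) probability law of
   (Y_1..Y_l, V_1..V_k, T_3..T_k). *)
Definition prob (R : realType) (l k : nat) (E : pred (Omega l k)) : R :=
  (#|[set w : Omega l k | admissibleT w.2 & E w]|)%:R
  / (#|[set w : Omega l k | admissibleT w.2]|)%:R.

From HB Require Import structures.
From mathcomp Require Import all_boot all_order all_algebra.
From mathcomp Require Import all_classical all_reals all_analysis.
From mathcomp Require Import ring lra.
Import Order.TTheory GRing.Theory Num.Theory.
Set Implicit Arguments. Unset Strict Implicit. Unset Printing Implicit Defensive.

(* A first-moment argument.  For fixed insertion positions T the map
   V |-> Z^k is a bijection of {0,1}^k, so (Y, Z^k) is uniform and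
   P(L >= n) is at most the proportion of pairs (y, z) having a common
   subsequence of length n.  Such a pair has a set b of n positions of y whose
   subword mask b y occurs in z; counting with the weights x^n y^(l-n) and
   summing generating functions gives, for x >= 1 and y >= 0,
     #pairs * x^n y^(l-n) <= 2^l (1+y)^l (1+x)^k.
   With s = eps^(1/4), x = 1 + 2s, y = s^2, n > l(1 - eps) and
   k <= 2l(1 - eps - 4s), the ratio #pairs / 2^(l+k) is at most exp(-2 s^2 l). *)

Lemma size_bitdrop V T k : size (bitdrop V T k) = k.
Proof.
elim: k => [|[|[|k]] IH] //.
by rewrite [bitdrop _ _ _]/= size_cat /= addnS -size_cat cat_take_drop IH.
Qed.

Lemma bitdrop_inj V V' T k : bitdrop V T k = bitdrop V' T k ->
  forall j, (0 < j <= k)%N -> V j = V' j.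
Proof.
elim: k => [|[|[|k]] IH].
- by move=> _ j /andP[/leq_trans h /h].
- by move=> [e] j; rewrite -eqn_leq => /eqP <-.
- by move=> [e1 e2] [|[|[|j]]].
rewrite [bitdrop V _ _]/= [bitdrop V' _ _]/=.
set z := bitdrop V T k.+2; set z' := bitdrop V' T k.+2 => /eqP.
have sz : size (take (T k.+3).-1 z) = size (take (T k.+3).-1 z').
  by rewrite !size_take /z /z' !size_bitdrop.
rewrite eqseq_cat // eqseq_cons => /and3P[/eqP e_take /eqP e_new /eqP e_drop].
have e_z : z = z' by rewrite -(cat_take_drop (T k.+3).-1 z) e_take e_drop cat_take_drop.
move=> j /andP[j0]; rewrite leq_eqVlt => /orP[/eqP -> //|jk].
by apply: IH => //; rewrite j0.
Qed.

Definition Zof_tuple k (t : seq nat) (v : k.-tuple bool) : k.-tuple bool :=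
  @Tuple k bool (Zof k v t) (introT eqP (size_bitdrop _ _ k)).

Lemma Zof_tuple_inj k t : injective (@Zof_tuple k t).
Proof.
move=> v v' /(congr1 val) /bitdrop_inj e_v.
apply: eq_from_tnth => i; rewrite !(tnth_nth false).
by have /= := e_v i.+1; rewrite ltn_ord; apply.
Qed.

Section BigTuple.
Variables (R : Type) (idx : R) (op : Monoid.com_law idx) (T : finType).

Lemma big_tuple0 (F : seq T -> R) : \big[op/idx]_(t : 0.-tuple T) F t = F [::].
Proof. by rewrite (big_pred1 [tuple]) // => t; apply/esym/eqP/tuple0. Qed.

Lemma big_tupleS n (F : seq T -> R) :
  \big[op/idx]_(t : n.+1.-tuple T) F t =
  \big[op/idx]_(x : T) \big[op/idx]_(t : n.-tuple T) F (x :: t).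
Proof.
rewrite pair_bigA (reindex (fun p : T * n.-tuple T => [tuple of p.1 :: p.2])) //=.
exists (fun t : n.+1.-tuple T => (thead t, [tuple of behead t])).
  by move=> [x t] _ /=; congr pair; apply: val_inj.
by move=> t _; rewrite [in RHS](tuple_eta t); apply: val_inj.
Qed.

End BigTuple.

Lemma lcs_le_size a b : (lcs a b <= size a)%N.
Proof. by apply/bigmax_leqP => m _; apply/size_subseq/mask_subseq. Qed.

Lemma lcs_ge_mask l (a : seq bool) (y : l.-tuple bool) n : (n <= lcs a y)%N ->
  exists2 b : l.-tuple bool, count id b = n & subseq (mask b y) a.
Proof.
pose P (m : (size a).-tuple bool) := subseq (mask m a) y.
have P0 : P (nseq_tuple (size a) false) by rewrite /P mask_false sub0seq.
rewrite /lcs (bigop.bigmax_eq_arg _ P0); case: arg_maxnP => // m Pm _ n_le.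
set u := mask m a in Pm n_le.
have /subseqP[b size_b e_b] : subseq (take n u) y := subseq_trans (take_subseq u n) Pm.
have size_b' : size b == l by rewrite size_b size_tuple.
exists (Tuple size_b') => /=.
  by rewrite -(size_mask (s := y)) ?size_b // -e_b size_takel.
by rewrite -e_b (subseq_trans (take_subseq u n)) ?mask_subseq.
Qed.

Lemma card_set_sum (T : finType) (p : pred T) : #|[set x | p x]| = (\sum_x p x)%N.
Proof. by rewrite cardsE -sum1_card big_mkcond. Qed.

Definition lcs_ge_count l k n : nat :=
  \sum_(y : l.-tuple bool) \sum_(z : k.-tuple bool) (n <= lcs z y).

Lemma card_admissible_Zof l k (G : l.-tuple bool -> seq bool -> bool) :
  #|[set w : Omega l k | admissibleT w.2 & G w.1.1 (Zof k w.1.2 (map val w.2))]| =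
  (#|[set t : k.-tuple 'I_k | admissibleT t]| *
   \sum_(y : l.-tuple bool) \sum_(z : k.-tuple bool) G y z)%N.
Proof.
pose F (yv : l.-tuple bool * k.-tuple bool) (t : k.-tuple 'I_k) : nat :=
  admissibleT t && G yv.1 (Zof k yv.2 (map val t)).
rewrite !card_set_sum big_distrl -(pair_bigA _ F) exchange_big /=.
apply: eq_bigr => t _; rewrite -(pair_bigA _ (fun y v => F (y, v) t)) big_distrr /=.
apply: eq_bigr => y _.
rewrite [in RHS](reindex_inj (@Zof_tuple_inj k (map val t))) big_distrr /=.
by apply: eq_bigr => v _; rewrite /F; case: (admissibleT t); rewrite ?mul1n.
Qed.

Lemma lcs_ge_count0 l n : (0 < n)%N -> lcs_ge_count l 0 n = 0%N.
Proof.
move=> n_gt0; rewrite /lcs_ge_count big1 // => y _; rewrite big1 // => z _.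
by have := lcs_le_size z y; rewrite size_tuple leqn0 => /eqP ->; rewrite leqNgt n_gt0.
Qed.

Section Weights.
Local Open Scope ring_scope.
Variable R : numDomainType.

Lemma sum_subseq_le (x : R) k (s : seq bool) : 1 <= x ->
  (\sum_(z : k.-tuple bool) (subseq s z)%:R) * x ^+ size s <= (1 + x) ^+ k.
Proof.
move=> x_ge1; have x_ge0 : 0 <= x := le_trans ler01 x_ge1.
elim: k s => [|k IH] s.
  rewrite (big_tuple0 _ (fun z : seq bool => (subseq s z)%:R : R)).
  by case: s => [|a s]; rewrite /= ?mul0r ?mul1r.
rewrite (big_tupleS _ _ (fun z : seq bool => (subseq s z)%:R : R)) big_bool.
rewrite [X in _ <= X]exprS [X in _ <= X]mulrDl mul1r.
case: s => [|a s] /=.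
  have IH0 : \sum_(z : k.-tuple bool) 1 <= (1 + x) ^+ k :> R.
    by have := IH [::]; under eq_bigr do rewrite sub0seq; rewrite mulr1.
  by rewrite mulr1 lerD // (le_trans IH0) // ler_peMl // exprn_ge0 // addr_ge0.
have IHs : (\sum_(z : k.-tuple bool) (subseq s z)%:R) * (x * x ^+ size s)
    <= x * (1 + x) ^+ k.
  by rewrite mulrCA; apply: ler_wpM2l.
have IHas := IH (a :: s); rewrite /= exprS in IHas.
by rewrite exprS mulrDl; case: a IHas => IHas /=; [rewrite addrC|]; apply: lerD.
Qed.

Lemma sum_expr_count_negb (y : R) l :
  \sum_(b : l.-tuple bool) y ^+ count negb b = (1 + y) ^+ l.
Proof.
elim: l => [|l IH]; first by rewrite (big_tuple0 _ (fun b => y ^+ count negb b)).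
rewrite (big_tupleS _ _ (fun b => y ^+ count negb b)) big_bool /=.
under eq_bigr do rewrite add0n; under [X in _ + X]eq_bigr do rewrite add1n exprS.
by rewrite -mulr_sumr IH exprS mulrDl mul1r.
Qed.

Lemma sum_count_eq_le (y : R) l n : 0 <= y ->
  \sum_(b : l.-tuple bool | count id b == n) y ^+ (l - n) <= (1 + y) ^+ l.
Proof.
move=> y_ge0; rewrite -sum_expr_count_negb big_mkcond /=.
apply: ler_sum => b _; case: eqP => [<-|_]; last exact: exprn_ge0.
by rewrite -[X in (X - _)%N](size_tuple b) -(count_predC id b) addKn.
Qed.

Lemma sum_lcs_ge_le (x y : R) l k n (u : l.-tuple bool) : 1 <= x -> 0 <= y ->
  (\sum_(z : k.-tuple bool) (n <= lcs z u)%N)%:R * (x ^+ n * y ^+ (l - n))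
    <= (1 + y) ^+ l * (1 + x) ^+ k.
Proof.
move=> x_ge1 y_ge0; have x_ge0 : 0 <= x := le_trans ler01 x_ge1.
have cover : (\sum_(z : k.-tuple bool) (n <= lcs z u) <=
    \sum_(b : l.-tuple bool | count id b == n)
      \sum_(z : k.-tuple bool) subseq (mask b u) z)%N.
  rewrite exchange_big /=; apply: leq_sum => z _.
  case n_le: (n <= lcs z u)%N => //; have [b count_b sub_b] := lcs_ge_mask n_le.
  by rewrite (bigD1 b) ?count_b //= sub_b.
apply: (@le_trans _ _ (\sum_(b : l.-tuple bool | count id b == n)
    (\sum_(z : k.-tuple bool) (subseq (mask b u) z)%:R) * (x ^+ n * y ^+ (l - n)))).
  rewrite -mulr_suml ler_wpM2r ?mulr_ge0 ?exprn_ge0 //.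
  by under [X in _ <= X]eq_bigr do rewrite -natr_sum; rewrite -natr_sum ler_nat.
apply: (@le_trans _ _
    (\sum_(b : l.-tuple bool | count id b == n) (1 + x) ^+ k * y ^+ (l - n))).
  apply: ler_sum => b /eqP count_b; rewrite mulrA ler_wpM2r ?exprn_ge0 //.
  by have := sum_subseq_le k (mask b u) x_ge1; rewrite size_mask ?size_tuple // count_b.
by rewrite -mulr_sumr mulrC ler_wpM2r ?exprn_ge0 ?addr_ge0 ?sum_count_eq_le.
Qed.

Lemma lcs_ge_count_le (x y : R) l k n : 1 <= x -> 0 <= y ->
  (lcs_ge_count l k n)%:R * (x ^+ n * y ^+ (l - n))
    <= (2 ^ l)%:R * ((1 + y) ^+ l * (1 + x) ^+ k).
Proof.
move=> x_ge1 y_ge0; rewrite natr_sum mulr_suml.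
apply: le_trans (ler_sum _ (fun u _ => sum_lcs_ge_le k n u x_ge1 y_ge0)) _.
by rewrite sumr_const card_tuple card_bool mulr_natl.
Qed.
End Weights.

Section Probability.
Local Open Scope ring_scope.
Variable R : realType.

Lemma le_prob l k (P P' : pred (Omega l k)) :
  (forall w, P w -> P' w) -> prob R P <= prob R P'.
Proof.
move=> PP'; apply: ler_wpM2r; first by rewrite invr_ge0.
rewrite ler_nat; apply/subset_leq_card/fintype.subsetP => w.
by rewrite !inE => /andP[-> /PP'].
Qed.

Lemma prob_lcs_ge_le l k n :
  prob R (fun w : Omega l k => n <= La w)%N
    <= (lcs_ge_count l k n)%:R / (2 ^ (l + k))%:R.
Proof.
set A := #|[set t : k.-tuple 'I_k | admissibleT t]|.
have card_all : #|[set w : Omega l k | admissibleT w.2]| = (A * 2 ^ (l + k))%N.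
  have := @card_admissible_Zof l k (fun _ _ => true); under eq_finset do rewrite andbT.
  by move=> ->; rewrite -/A !sum_nat_const !card_tuple card_bool expnD muln1.
rewrite /prob card_all (@card_admissible_Zof l k (fun y z => n <= lcs z y)%N) -/A.
have [->|A_gt0] := posnP A; first by rewrite !mul0n mul0r divr_ge0.
by rewrite !natrM invfM mulrACA divff ?mul1r // pnatr_eq0 -lt0n.
Qed.
End Probability.

Section ExponentialBounds.
Local Open Scope ring_scope.
Variable R : realType.

Lemma exprn_le_expR (a e : R) m : 0 <= a -> a <= expR e -> a ^+ m <= expR (m%:R * e).
Proof. by move=> a_ge0 a_le; rewrite expRM_natl lerXn2r ?nnegrE ?expR_ge0. Qed.

Lemma expR_le_exprn (a e : R) m : expR e <= a -> expR (m%:R * e) <= a ^+ m.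
Proof.
move=> le_a; rewrite expRM_natl lerXn2r ?nnegrE ?expR_ge0 //.
exact: le_trans (expR_ge0 e) le_a.
Qed.

Lemma expR_NV_le (a : R) : 0 < a -> expR (- a^-1) <= a.
Proof.
move=> a_gt0; rewrite expRN -[leRHS]invrK lef_pV2 ?posrE ?expR_gt0 ?invr_gt0 //.
by apply: le_trans _ (expR_ge1Dx _); rewrite lerDr.
Qed.

Lemma expR_divD1_le (u : R) : 0 <= u -> expR (u / (1 + u)) <= 1 + u.
Proof.
move=> u_ge0; have u1_gt0 : 0 < 1 + u by rewrite ltr_pwDl.
rewrite -[leRHS]invrK -[expR _]invrK -expRN lef_pV2 ?posrE ?expR_gt0 ?invr_gt0 //.
rewrite [leLHS](_ : _ = 1 - u / (1 + u)); first exact: expR_ge1Dx.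
by field; rewrite gt_eqF.
Qed.

Lemma union_bound_le_expR (s : R) l n k : 0 < s ->
  l%:R * (1 - s ^+ 4) <= n%:R -> k%:R <= 2 * l%:R * (1 - s ^+ 4 - 4 * s) ->
  (1 + s ^+ 2) ^+ l * (1 + s) ^+ k
    <= expR (- (2 * s ^+ 2 * l%:R)) * ((1 + 2 * s) ^+ n * (s ^+ 2) ^+ (l - n)).
Proof.
move=> s_gt0 n_ge k_le; have s_ge0 := ltW s_gt0.
have s2_gt0 : 0 < s ^+ 2 by rewrite exprn_gt0.
have ln_le : (l - n)%:R <= s ^+ 4 * l%:R.
  have [n_le_l|/ltnW] := leqP n l; first by rewrite natrB //; lra.
  by rewrite -subn_eq0 => /eqP ->; rewrite mulr_ge0 ?exprn_ge0.
(* [a <= ln (1 + 2 s)] by [expR_divD1_le]. *)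
set a := 2 * s / (1 + 2 * s).
have a_ge0 : 0 <= a by rewrite divr_ge0 ?addr_ge0 ?mulr_ge0.
have upper : (1 + s ^+ 2) ^+ l * (1 + s) ^+ k <= expR (l%:R * s ^+ 2 + k%:R * s).
  rewrite expRD ler_pM ?exprn_ge0 ?addr_ge0 ?exprn_ge0 //.
    by rewrite exprn_le_expR ?addr_ge0 ?exprn_ge0 ?expR_ge1Dx.
  by rewrite exprn_le_expR ?addr_ge0 ?expR_ge1Dx.
have lower : expR (- (2 * s ^+ 2 * l%:R) + (n%:R * a + (l - n)%:R * - (s ^+ 2)^-1))
    <= expR (- (2 * s ^+ 2 * l%:R)) * ((1 + 2 * s) ^+ n * (s ^+ 2) ^+ (l - n)).
  rewrite !expRD ler_wpM2l ?expR_ge0 // ler_pM ?expR_ge0 //.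
    by apply: expR_le_exprn; rewrite /a expR_divD1_le ?mulr_ge0.
  exact/expR_le_exprn/expR_NV_le.
apply: le_trans upper (le_trans _ lower); rewrite ler_expR.
have poly : -4 * s ^+ 2 + 2 * s - 2 * s ^+ 5 - (1 - s ^+ 4) * a <= 0.
  have -> : -4 * s ^+ 2 + 2 * s - 2 * s ^+ 5 - (1 - s ^+ 4) * a
          = - (8 * s ^+ 3 + 4 * s ^+ 6) / (1 + 2 * s).
    by rewrite /a; field; rewrite gt_eqF // ltr_pwDl ?mulr_ge0.
  by rewrite mulNr oppr_le0 divr_ge0 ?addr_ge0 ?mulr_ge0 ?exprn_ge0.
have ln_div : (l - n)%:R * (s ^+ 2)^-1 <= s ^+ 2 * l%:R.
  by rewrite ler_pdivrMr // mulrAC -exprD.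
have k_s : k%:R * s <= 2 * l%:R * (1 - s ^+ 4 - 4 * s) * s by rewrite ler_wpM2r.
have n_a : l%:R * (1 - s ^+ 4) * a <= n%:R * a by rewrite ler_wpM2r.
have l_poly : l%:R * (-4 * s ^+ 2 + 2 * s - 2 * s ^+ 5 - (1 - s ^+ 4) * a) <= 0.
  by rewrite mulr_ge0_le0.
lra.
Qed.
End ExponentialBounds.

Import numFieldNormedType.Exports.
Local Open Scope classical_set_scope.
Local Open Scope ring_scope.

Section Decay.
Variable R : realType.

Lemma prob_lcs_ge_le_expR (s : R) l k n : 0 < s ->
  l%:R * (1 - s ^+ 4) <= n%:R -> k%:R <= 2 * l%:R * (1 - s ^+ 4 - 4 * s) ->
  prob R (fun w : Omega l k => n <= La w)%N <= expR (- (2 * s ^+ 2 * l%:R)).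
Proof.
move=> s_gt0 n_ge k_le; apply: le_trans (prob_lcs_ge_le R l k n) _.
set P := (1 + 2 * s) ^+ n * (s ^+ 2) ^+ (l - n).
have P_gt0 : 0 < P by rewrite mulr_gt0 ?exprn_gt0 ?addr_gt0 ?mulr_gt0.
rewrite ler_pdivrMr ?ltr0n ?expn_gt0 // -(ler_pM2r P_gt0).
apply: le_trans (lcs_ge_count_le l k n (x := 1 + 2 * s) (y := s ^+ 2) _ _) _.
- by rewrite lerDl mulr_ge0 ?ltW.
- by rewrite exprn_ge0 ?ltW.
have -> : 1 + (1 + 2 * s) = 2 * (1 + s) by ring.
rewrite exprMn !natrX exprD.
have -> : 2 ^+ l * ((1 + s ^+ 2) ^+ l * (2 ^+ k * (1 + s) ^+ k))
        = 2 ^+ l * 2 ^+ k * ((1 + s ^+ 2) ^+ l * (1 + s) ^+ k) :> R by ring.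
rewrite [leRHS]mulrAC [leRHS]mulrC ler_wpM2l ?mulr_ge0 ?exprn_ge0 //.
exact: union_bound_le_expR.
Qed.

Definition lcs_delta (e : R) : R := e + 4 * Num.sqrt (Num.sqrt e).

Lemma lcs_delta_cvg0 : lcs_delta x @[x --> 0^'] --> 0.
Proof.
apply: cvg_within_filter.
have delta_cvg : lcs_delta x @[x --> (0 : R)] --> 0 + 4 * Num.sqrt (Num.sqrt 0).
  apply: cvgD; first exact: cvg_id.
  apply: cvgMr; apply: (continuous_comp (f := Num.sqrt) (g := Num.sqrt));
    exact: sqrt_continuous.
by rewrite !sqrtr0 mulr0 addr0 in delta_cvg.
Qed.

End Decay.

Theorem lemma7 (R : realType) :
  exists delta : R -> R,
    delta x @[x --> 0^'] --> 0 /\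
    forall eps : R, 0 < eps < 1 ->
      exists c C : R, 0 < c /\ 0 < C /\
        forall l : nat, (0 < l)%N ->
          let k := Num.truncn (2 * l%:R * (1 - delta eps)) in
          prob R (fun w : Omega l k => l%:R * (1 - eps) < (La w)%:R)
            <= C * expR (- (c * l%:R)).
Proof.
exists (@lcs_delta R); split; first exact: lcs_delta_cvg0.
move=> eps /andP[eps_gt0 eps_lt1]; set s := Num.sqrt (Num.sqrt eps).
have s_gt0 : 0 < s by rewrite !sqrtr_gt0.
have s4 : s ^+ 4 = eps by rewrite (exprM s 2 2) sqr_sqrtr ?sqr_sqrtr ?sqrtr_ge0 ?ltW.
exists (2 * s ^+ 2), 1; split; first by rewrite mulr_gt0 ?exprn_gt0.
split=> // l l_gt0 /=; set k := Num.truncn _; rewrite mul1r.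
set n := (Num.truncn (l%:R * (1 - eps))).+1.
have l_eps_ge0 : 0 <= l%:R * (1 - eps) by rewrite mulr_ge0 // subr_ge0 ltW.
apply: le_trans (@le_prob R l k _ (fun w => n <= La w)%N _) _.
  by move=> w; rewrite /n truncn_lt_nat.
have [k0|k_gt0] := posnP k.
  apply: le_trans (prob_lcs_ge_le R l k n) _.
  by rewrite k0 lcs_ge_count0 // mul0r ltW ?expR_gt0.
apply: prob_lcs_ge_le_expR => //; first by rewrite s4 ltW ?truncnS_gt.
move: k_gt0; rewrite /k truncn_gt0 s4 /lcs_delta -/s opprD addrA.
by move=> /(le_trans ler01) k_ge0; rewrite truncn_le.
Qed.
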